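(* Let $A$ and $d$ be positive integers with $d<A-1$, and let $r$ be the maximum number of distinct preferences over $A$ alternatives that are simultaneously representable in a $d$-dimensional Euclidean preference model. Let $\ell$ be the number of unique preferences in a given profile and suppose $\ell\geq r$. Label the alternatives $a_1,\dots,a_A$, let $M=A-d$, and for $n\in\{1,\dots,M-1\}$ let $E_n$ be the event that a uniformly random strict ordering of $a_1,\dots,a_A$ places $a_n$ within its first $M-n$ positions. Let $C=\bigcup_{n=1}^{M-1} E_n$. Then $$r \leq \hat{r} = \left(1-\mathbb{P}(C)\right) A!.$$
   Context: A preference is a strict total order on the alternatives. A set of preferences $\{>_1,\dots,>_m\}$ over alternatives $a_1,\dots,a_A$ is simultaneously representable in a $d$-dimensional Euclidean preference model if there exist points $x^{a}\in\mathbb{R}^d$ for each alternative $a$ and $w^{i}\in\mathbb{R}^d$ for each $i\in\{1,\dots,m\}$ such that for all alternatives $a,b$ and all $i$, $a>_i b \iff \|x^a-w^i\|<\|x^b-w^i\|$ (standard Euclidean norm). A profile is an assignment of preferences to a population of individuals; its number of unique preferences is the number of distinct preferences it contains. *)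

From HB Require Import structures.
From mathcomp Require Import all_boot all_order all_algebra all_fingroup.
From mathcomp Require Import reals.
Set Implicit Arguments. Unset Strict Implicit. Unset Printing Implicit Defensive.
Import Order.TTheory GRing.Theory Num.Theory.
Local Open Scope ring_scope.

(* A preference over the alternatives 'I_A (alternative a_{i+1} is i) is
   encoded by its rank permutation s : {perm 'I_A}:  s a = position of a
   (0 = most preferred), and  a >_s b  iff  s a < s b. *)
Definition prefers (A : nat) (s : {perm 'I_A}) (a b : 'I_A) : bool := (s a < s b)%N.

Definition enorm (R : realType) (d : nat) (v : 'rV[R]_d) : R :=
  Num.sqrt (\sum_(k < d) (v ord0 k) ^+ 2).

Definition representable (R : realType) (A d : nat) (S : {set {perm 'I_A}}) : Prop :=
  exists (x : 'I_A -> 'rV[R]_d) (w : {perm 'I_A} -> 'rV[R]_d),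
    forall s, s \in S -> forall a b : 'I_A,
      prefers s a b <-> enorm (x a - w s) < enorm (x b - w s).

Definition is_max_representable (R : realType) (A d r : nat) : Prop :=
  (exists S : {set {perm 'I_A}}, representable R d S /\ #|S| = r) /\
  (forall S : {set {perm 'I_A}}, representable R d S -> (#|S| <= r)%N).

(* Event C = union of E_n, n = 1..M-1, with M = A - d: E_n = the ordering places
   a_n (ordinal n-1) within its first M - n positions. *)
Definition event_C (A d : nat) : {set {perm 'I_A}} :=
  [set s : {perm 'I_A} | [exists i : 'I_A,
     (1 <= i.+1 <= (A - d) - 1)%N && (s i < (A - d) - i.+1)%N]].

Definition unif_prob (A : nat) (E : {set {perm 'I_A}}) : rat :=
  #|E|%:R / #|{perm 'I_A}|%:R.

Definition n_unique (A : nat) (P : seq {perm 'I_A}) : nat := size (undup P).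

From HB Require Import structures.
From mathcomp Require Import all_boot all_order all_algebra all_fingroup.
From mathcomp Require Import reals boolp.
From mathcomp Require Import ring lra zify.
Set Implicit Arguments. Unset Strict Implicit. Unset Printing Implicit Defensive.
Import Order.TTheory GRing.Theory Num.Theory.

(* A voter at w prefers a to b iff |x_a - w| < |x_b - w|, i.e. iff f_a(w) < f_b(w)
   for the affine functions f_a(w) = |x_a|^2 - 2<x_a, w>.  So r is at most the
   number N(n, d) of orderings of n affine functions realized at points of R^d
   where their values are distinct.  Among the orderings that restrict to a given
   ordering P' of f_0, ..., f_(n-1), each one is determined by the set of b with
   f_b < f_n; these sets form a chain, and two of them differ only at indices b
   for which P' is realized on the hyperplane f_n = f_b, a copy of R^(d-1).
   Double counting gives N(n+1, d+1) <= N(n, d+1) + n N(n, d), which is bounded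
   by prod_(1 <= k <= n) min(d+1, k): the number of rank permutations s with
   s(i) + i + d + 1 >= n, all of which lie outside C. *)

Fixpoint pattern_bound (n d : nat) : nat :=
  if n is m.+1 then minn d.+1 n * pattern_bound m d else 1.

Lemma pattern_bound0 n : pattern_bound n 0 = 1.
Proof. by elim: n => //= n ->; rewrite muln1 /minn; case: n. Qed.

Lemma pattern_bound_fact n d : n <= d.+1 -> pattern_bound n d = n`!.
Proof.
elim: n => // n IH le_nd /=; rewrite IH ?(ltnW le_nd) // factS.
by congr (_ * _); apply/minn_idPr.
Qed.

Lemma pattern_bound_growth n d :
  n * pattern_bound n d <= minn d.+1 n * pattern_bound n d.+1.
Proof.
elim: n => // n IH /=; rewrite mulnCA leq_mul2l; apply/orP; right.
have [le_nd | lt_dn] := leqP n d.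
  rewrite !pattern_bound_fact ?(leqW le_nd) ?(leqW (leqW le_nd)) //.
  by rewrite (minn_idPr _) // ltnS leqW.
rewrite (minn_idPl _) //; rewrite (minn_idPl _) ?(ltnW lt_dn) // in IH.
rewrite -(leq_pmul2l (leq_ltn_trans (leq0n d) lt_dn)).
apply: (@leq_trans (n.+1 * (d.+1 * pattern_bound n d.+1))).
  by rewrite mulnCA leq_mul2l IH orbT.
by rewrite !mulnA leq_mul2r; apply/orP; right; lia.
Qed.

Lemma pattern_boundSS n d :
  pattern_bound n d.+1 + n * pattern_bound n d <= pattern_bound n.+1 d.+1.
Proof.
rewrite /= (_ : minn d.+2 n.+1 = (minn d.+1 n).+1); last by lia.
by rewrite mulSn leq_add2l pattern_bound_growth.
Qed.

Definition staircase n d : {set {perm 'I_n}} :=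
  [set s : {perm 'I_n} | [forall i, n <= s i + i + d.+1]].

Lemma card_staircaseS n d :
  minn d.+1 n.+1 * #|staircase n d| <= #|staircase n.+1 d|.
Proof.
(* rank a new alternative 0 at position n - j, the others keeping their order *)
pose ins (js : 'I_(minn d.+1 n.+1) * {perm 'I_n}) :=
  lift_perm ord0 (inord (n - js.1)) js.2.
have ins_inj : injective ins.
  move=> [j s] [j' s'] /= eq_ins.
  have := congr1 (fun t : {perm 'I_n.+1} => val (t ord0)) eq_ins.
  rewrite /= !lift_perm_id !inordK ?ltnS ?leq_subr //.
  move: (ltn_ord j) (ltn_ord j') => /= ltj ltj' eq_nj.
  have eq_j : j = j' by apply: ord_inj; lia.
  subst j'; congr (_, _); apply/permP => i.
  have := congr1 (fun t : {perm 'I_n.+1} => t (lift ord0 i)) eq_ins.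
  by rewrite /= !lift_perm_lift => /lift_inj.
have ins_sub : ins @: setX setT (staircase n d) \subset staircase n.+1 d.
  apply/subsetP => t /imsetP[[j s] /setXP[_]]; rewrite inE => /forallP stair_s ->.
  rewrite inE; apply/forallP => i; rewrite /ins /=.
  case: (unliftP ord0 i) => [i' -> | ->].
    rewrite lift_perm_lift /= /bump; have := stair_s i'; lia.
  rewrite lift_perm_id /= inordK; move: (ltn_ord j); lia.
apply: leq_trans (subset_leq_card ins_sub).
by rewrite card_imset // cardsX cardsT card_ord.
Qed.

Lemma pattern_bound_le_staircase n d : pattern_bound n d <= #|staircase n d|.
Proof.
elim: n => [|n IH].
  by rewrite card_gt0; apply/set0Pn; exists 1%g; rewrite inE; apply/forallP => -[].
by apply: leq_trans (card_staircaseS n d); rewrite /= leq_mul2l IH orbT.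
Qed.

Lemma staircase_sub_compl_event_C A d : staircase A d \subset ~: event_C A d.
Proof.
apply/subsetP => s; rewrite !inE => /forallP stair_s.
by apply/existsP => -[i /andP[/andP[_ le_i] lt_si]]; have := stair_s i; lia.
Qed.

Notation pattern n := {ffun 'I_n * 'I_n -> bool}.

Definition lt_pattern disp (T : porderType disp) n (f : 'I_n -> T) : pattern n :=
  [ffun ab => (f ab.1 < f ab.2)%O].

Lemma lt_patternE disp (T : porderType disp) n (f : 'I_n -> T) a b :
  lt_pattern f (a, b) = (f a < f b)%O.
Proof. by rewrite ffunE. Qed.

Lemma eq_lt_pattern disp1 disp2 (T1 : porderType disp1) (T2 : porderType disp2)
    n (f : 'I_n -> T1) (g : 'I_n -> T2) :
  lt_pattern f = lt_pattern g <-> forall a b, (f a < f b)%O = (g a < g b)%O.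
Proof.
split=> [eq_fg a b | eq_fg]; last by apply/ffunP => -[a b]; rewrite !ffunE.
by rewrite -!lt_patternE eq_fg.
Qed.

Lemma lt_pattern_inj disp1 disp2 (T1 : porderType disp1) (T2 : orderType disp2)
    n (f : 'I_n -> T1) (g : 'I_n -> T2) :
  lt_pattern f = lt_pattern g -> injective g -> injective f.
Proof.
move/eq_lt_pattern => eq_fg inj_g a b eq_f; apply: inj_g.
by apply/eqP; rewrite eq_le !leNgt -!eq_fg eq_f ltxx.
Qed.

Lemma card_ord_lt n k : k <= n -> #|[set j : 'I_n | j < k]| = k.
Proof.
move=> le_kn; have inj_widen : injective (widen_ord le_kn).
  by move=> i j /(congr1 val) eq_ij; apply: val_inj.
rewrite -[RHS]card_ord -(card_imset _ inj_widen).
apply: eq_card => j; rewrite inE; apply/idP/imsetP => [lt_jk | [i _ ->]].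
  by exists (Ordinal lt_jk); last apply: val_inj.
exact: (ltn_ord i).
Qed.

Lemma lt_pattern_perm_inj n : injective (fun s : {perm 'I_n} => lt_pattern s).
Proof.
have rankE (s : {perm 'I_n}) a : #|[set b | (s b < s a)%O]| = s a.
  rewrite -[RHS](card_ord_lt (ltnW (ltn_ord (s a)))) -[RHS](card_preimset _ (@perm_inj _ s)).
  by apply: eq_card => b; rewrite !inE.
move=> s t /eq_lt_pattern eq_st; apply/permP => a; apply: ord_inj.
by rewrite -rankE -[RHS]rankE; apply: eq_card => b; rewrite !inE eq_st.
Qed.

Definition restr_pattern {n} (P : pattern n.+1) : pattern n :=
  [ffun ab => P (lift ord_max ab.1, lift ord_max ab.2)].

Lemma restr_lt_pattern disp (T : porderType disp) n (f : 'I_n.+1 -> T) :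
  restr_pattern (lt_pattern f) = lt_pattern (f \o lift ord_max).
Proof. by apply/ffunP => -[a b]; rewrite !ffunE. Qed.

Lemma card_chain_le (I T : finType) (X : {set I}) (D : I -> {set T}) (K : {set T}) :
  {in X &, injective D} ->
  {in X &, forall i j, (D i \subset D j) || (D j \subset D i)} ->
  {in X &, forall i j, D i :\: D j \subset K} ->
  #|X| <= #|K|.+1.
Proof.
move=> inj_D chain_D diff_D.
have [-> | [i0 Xi0]] := set_0Vmem X; first by rewrite cards0.
have [m Xm min_m] := arg_minnP (fun i => #|D i|) Xi0.
have sub_m i : i \in X -> D m \subset D i.
  move=> Xi; have /orP[// | sub_im] := chain_D _ _ Xm Xi.
  by have /eqP <- : D i == D m by rewrite eqEcard sub_im min_m.
pose excess i : 'I_#|K|.+1 := inord #|D i :\: D m|.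
have excessE i : i \in X -> excess i = #|D i| - #|D m| :> nat.
  move=> Xi; rewrite inordK ?ltnS ?subset_leq_card ?diff_D //.
  by rewrite cardsD (setIidPr (sub_m i Xi)).
have inj_excess : {in X &, injective excess}.
  move=> i j Xi Xj /(congr1 val); rewrite /= !excessE //.
  have := subset_leq_card (sub_m i Xi); have := subset_leq_card (sub_m j Xj).
  move=> le_mj le_mi eq_card_ij; apply: inj_D => //.
  have /orP[sub_ij | sub_ji] := chain_D _ _ Xi Xj; apply/eqP.
    by rewrite eqEcard sub_ij; lia.
  by rewrite eq_sym eqEcard sub_ji; lia.
by rewrite -(card_in_imset inj_excess) (leq_trans (max_card _)) ?card_ord.
Qed.

Lemma sum_card_incidence (I J : finType) (X : {set I}) (K : I -> {set J}) :
  \sum_(i in X) #|K i| = \sum_j #|[set i in X | j \in K i]|.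
Proof.
under eq_bigr do rewrite -sum1_card big_mkcond /=.
rewrite exchange_big; apply: eq_bigr => j _.
by rewrite -sum1_card -big_mkcondr; apply: eq_bigl => i; rewrite inE.
Qed.

Local Open Scope ring_scope.

Section AffineFunctionals.
Variable R : realFieldType.

Definition affine d := (R * 'rV[R]_d)%type.

Definition aeval d (p : affine d) (w : 'rV[R]_d) : R := p.1 + \sum_k p.2 0 k * w 0 k.

Definition aeval_at n d (F : 'I_n -> affine d) w (a : 'I_n) : R := aeval (F a) w.

Definition realized n d (F : 'I_n -> affine d) (P : pattern n) :=
  exists2 w, injective (aeval_at F w) & lt_pattern (aeval_at F w) = P.

Lemma aevalB d (p q : affine d) w : aeval (p - q) w = aeval p w - aeval q w.
Proof.
rewrite /aeval /= (_ : \sum_k _ = \sum_k p.2 0 k * w 0 k - \sum_k q.2 0 k * w 0 k).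
  by ring.
by rewrite -sumrB; apply: eq_bigr => k _; rewrite !mxE mulrBl.
Qed.

Lemma aeval_const d (p : affine d) w : p.2 = 0 -> aeval p w = p.1.
Proof. by move=> p2_0; rewrite /aeval big1 ?addr0 // => k _; rewrite p2_0 mxE mul0r. Qed.

Lemma aeval_segment d (p : affine d) w1 w2 t :
  aeval p ((1 - t) *: w1 + t *: w2) = (1 - t) * aeval p w1 + t * aeval p w2.
Proof.
rewrite /aeval (_ : \sum_k _ = (1 - t) * \sum_k p.2 0 k * w1 0 k
                             + t * \sum_k p.2 0 k * w2 0 k); first by ring.
by rewrite !mulr_sumr -big_split; apply: eq_bigr => k _ /=; rewrite !mxE; ring.
Qed.

Lemma segment_pattern n d (F : 'I_n -> affine d) w1 w2 t :
  injective (aeval_at F w1) ->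
  lt_pattern (aeval_at F w1) = lt_pattern (aeval_at F w2) -> 0 < t < 1 ->
  let w := (1 - t) *: w1 + t *: w2 in
  injective (aeval_at F w) /\ lt_pattern (aeval_at F w) = lt_pattern (aeval_at F w1).
Proof.
move=> inj1 /eq_lt_pattern eq12 /andP[t_gt0 t_lt1] w.
have lt_w a b : aeval_at F w1 a < aeval_at F w1 b -> aeval_at F w a < aeval_at F w b.
  move=> lt1; have lt2 := lt1; rewrite eq12 in lt2.
  by move: lt1 lt2; rewrite /aeval_at !aeval_segment; nra.
suff eq_w : lt_pattern (aeval_at F w) = lt_pattern (aeval_at F w1).
  by split=> //; apply: lt_pattern_inj eq_w inj1.
apply/eq_lt_pattern => a b; have [-> | neq_ab] := eqVneq a b; first by rewrite !ltxx.
have neq_w1 : aeval_at F w1 a != aeval_at F w1 b.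
  by apply: contra neq_ab => /eqP /inj1 ->.
have /orP[lt_ab | lt_ba] := lt_total neq_w1; first by rewrite lt_ab lt_w.
by rewrite (lt_gtF lt_ba) (lt_gtF (lt_w _ _ lt_ba)).
Qed.

Lemma crossing_point n d (F : 'I_n -> affine d) (p q : affine d) w1 w2 :
  injective (aeval_at F w1) ->
  lt_pattern (aeval_at F w1) = lt_pattern (aeval_at F w2) ->
  aeval q w1 < aeval p w1 -> aeval p w2 < aeval q w2 ->
  exists w, [/\ injective (aeval_at F w),
                lt_pattern (aeval_at F w) = lt_pattern (aeval_at F w1)
              & aeval p w = aeval q w].
Proof.
move=> inj1 eq12 lt1 lt2.
pose t := (aeval p w1 - aeval q w1) / ((aeval p w1 - aeval q w1) - (aeval p w2 - aeval q w2)).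
have t_in : 0 < t < 1.
  rewrite divr_gt0 ?subr_gt0 //=; last lra.
  by rewrite ltr_pdivrMr ?mul1r; lra.
have [inj_t eq_t] := segment_pattern inj1 eq12 t_in.
exists ((1 - t) *: w1 + t *: w2); split=> //; apply/eqP; rewrite -subr_eq0.
rewrite !aeval_segment (_ : _ - _ = (aeval p w1 - aeval q w1)
   - t * ((aeval p w1 - aeval q w1) - (aeval p w2 - aeval q w2))); last by ring.
by rewrite /t divfK ?subrr // gt_eqF //; lra.
Qed.

Lemma hyperplane_section d (q : affine d.+1) : q.2 != 0 ->
  exists (proj : 'rV[R]_d.+1 -> 'rV[R]_d) (sect : affine d.+1 -> affine d),
    forall p w, aeval q w = 0 -> aeval (sect p) (proj w) = aeval p w.
Proof.
move=> nz_q; have [k qk_neq0] : exists k, q.2 0 k != 0.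
  apply/existsP; apply: contraNT nz_q; rewrite negb_exists => /forallP q0.
  by apply/eqP/rowP => k; rewrite mxE; apply/eqP; have := q0 k; rewrite negbK.
exists (fun w => \row_(j < d) w 0 (lift k j)).
exists (fun p : affine d.+1 => (p.1 - p.2 0 k * q.1 / q.2 0 k,
  \row_(j < d) (p.2 0 (lift k j) - p.2 0 k * q.2 0 (lift k j) / q.2 0 k))).
move=> p w; rewrite /aeval (bigD1_ord k) //= => on_q.
rewrite (bigD1_ord k) //=.
set Y := \sum_(j < d) q.2 0 (lift k j) * w 0 (lift k j) in on_q.
rewrite (_ : \sum_j _ = \sum_(j < d) p.2 0 (lift k j) * w 0 (lift k j)
                        - p.2 0 k / q.2 0 k * Y).
  rewrite (_ : Y = - q.1 - q.2 0 k * w 0 k); first by field.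
  by move: on_q; lra.
rewrite /Y mulr_sumr -sumrB; apply: eq_bigr => j _ /=; rewrite !mxE; ring.
Qed.

Lemma card_realized_dim0 n (F : 'I_n -> affine 0) (S : {set pattern n}) :
  {in S, forall P, realized F P} -> (#|S| <= 1)%N.
Proof.
move=> realized_S; rewrite -(cards1 (lt_pattern (aeval_at F 0))) subset_leq_card //.
by apply/subsetP => P /realized_S[w _ <-]; rewrite inE (thinmx0 w).
Qed.

Section CountingStep.
Variables (n d : nat) (F : 'I_n.+1 -> affine d.+1) (S : {set pattern n.+1}).
Hypothesis realized_S : {in S, forall P, realized F P}.
Hypothesis card_realized_n : forall d' (G : 'I_n -> affine d') (S' : {set pattern n}),
  {in S', forall P', realized G P'} -> (#|S'| <= pattern_bound n d')%N.

Let z : 'I_n.+1 := ord_max.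
Let F' : 'I_n -> affine d.+1 := F \o lift z.

Definition crossing (P' : pattern n) (b : 'I_n) := exists w,
  [/\ injective (aeval_at F' w), lt_pattern (aeval_at F' w) = P'
    & aeval (F z) w = aeval (F (lift z b)) w].

Let K (P' : pattern n) : {set 'I_n} := [set b | `[< crossing P' b >]].
Let below (P : pattern n.+1) : {set 'I_n} := [set b | P (lift z b, z)].
Let fiber (P' : pattern n) : {set pattern n.+1} := [set P in S | restr_pattern P == P'].

Lemma realized_fiber P' P : P \in fiber P' -> exists2 w,
  injective (aeval_at F w) &
  lt_pattern (aeval_at F w) = P /\ lt_pattern (aeval_at F' w) = P'.
Proof.
rewrite inE => /andP[/realized_S[w inj_w <-] /eqP <-].
by exists w => //; rewrite restr_lt_pattern.
Qed.

Lemma in_below w b :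
  (b \in below (lt_pattern (aeval_at F w))) = (aeval (F (lift z b)) w < aeval (F z) w).
Proof. by rewrite inE ffunE. Qed.

Lemma notin_below w b : injective (aeval_at F w) ->
  (b \notin below (lt_pattern (aeval_at F w))) = (aeval (F z) w < aeval (F (lift z b)) w).
Proof.
move=> inj_w; rewrite in_below -leNgt le_eqVlt.
suff /negbTE -> : aeval (F z) w != aeval (F (lift z b)) w by [].
by apply/eqP => /inj_w /eqP; rewrite (negbTE (neq_lift z b)).
Qed.

Lemma below_chain P' :
  {in fiber P' &, forall P Q, (below P \subset below Q) || (below Q \subset below P)}.
Proof.
move=> _ _ /realized_fiber[w1 inj1 [<- pat1]] /realized_fiber[w2 inj2 [<- pat2]].
have [// | /subsetPn[b b1 nb2] /=] := boolP (below _ \subset below _).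
apply/subsetP => c c2; apply: contraT => nc1.
rewrite in_below in b1; rewrite in_below in c2.
rewrite notin_below // in nb2; rewrite notin_below // in nc1.
have /eq_lt_pattern/(_ b c) := etrans pat1 (esym pat2).
by rewrite /aeval_at /= (lt_trans b1 nc1) (lt_gtF (lt_trans c2 nb2)).
Qed.

Lemma below_diff_crossing P' : {in fiber P' &, forall P Q, below P :\: below Q \subset K P'}.
Proof.
move=> _ _ /realized_fiber[w1 inj1 [<- pat1]] /realized_fiber[w2 inj2 [<- pat2]].
apply/subsetP => b; rewrite in_setD notin_below // in_below => /andP[lt2 lt1].
have inj1' : injective (aeval_at F' w1) by apply: inj_comp inj1 (@lift_inj _ z).
have [w [inj_w pat_w tie]] := crossing_point inj1' (etrans pat1 (esym pat2)) lt1 lt2.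
by rewrite inE; apply/asboolP; exists w; split; rewrite // pat_w.
Qed.

Lemma below_inj P' : {in fiber P' &, injective below}.
Proof.
move=> _ _ /realized_fiber[w1 inj1 [<- pat1]] /realized_fiber[w2 inj2 [<- pat2]] eq_below.
have /eq_lt_pattern eq12 := etrans pat1 (esym pat2).
apply/eq_lt_pattern => a c.
case: (unliftP z a) => [a' ->|->]; case: (unliftP z c) => [c' ->|->].
- exact: eq12.
- by rewrite /aeval_at -!in_below eq_below.
- by rewrite /aeval_at -!notin_below // eq_below.
- by rewrite !ltxx.
Qed.

Lemma card_fiber P' : (#|fiber P'| <= #|K P'|.+1)%N.
Proof. exact: card_chain_le (@below_inj P') (@below_chain P') (@below_diff_crossing P'). Qed.

Lemma realized_restr : {in restr_pattern @: S, forall P', realized F' P'}.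
Proof.
move=> _ /imsetP[P /realized_S[w inj_w <-] ->].
by exists w; [apply: inj_comp inj_w (@lift_inj _ z) | rewrite restr_lt_pattern].
Qed.

Lemma card_crossing b :
  (#|[set P' in restr_pattern @: S | b \in K P']| <= pattern_bound n d)%N.
Proof.
pose q := F z - F (lift z b).
have tieE w : aeval (F z) w = aeval (F (lift z b)) w <-> aeval q w = 0.
  by rewrite aevalB; split=> [-> | /eqP]; [rewrite subrr | rewrite subr_eq0 => /eqP].
have [q2_0 | q2_neq0] := eqVneq q.2 0.
  (* q is constant, and nonzero since F is injective somewhere *)
  suff -> : [set P' in restr_pattern @: S | b \in K P'] = set0 by rewrite cards0.
  apply/setP => P'; rewrite !inE; apply/negP => /andP[/imsetP[P /realized_S[w0 inj0 _] _]].
  move=> /asboolP[w [_ _ /tieE]]; rewrite aeval_const // => q1_0.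
  have /tieE/inj0/eqP : aeval q w0 = 0 by rewrite aeval_const.
  by rewrite (negbTE (neq_lift z b)).
have [proj [sect sectE]] := hyperplane_section q2_neq0.
apply: (card_realized_n (G := sect \o F')) => P'.
rewrite !inE => /andP[_ /asboolP[w [inj_w <- /tieE on_q]]].
have valsE : aeval_at (sect \o F') (proj w) =1 aeval_at F' w by move=> a; exact: sectE.
exists (proj w); first exact: eq_inj inj_w (fsym valsE).
by apply/eq_lt_pattern => a c; rewrite !valsE.
Qed.

Lemma card_realized_step : (#|S| <= pattern_bound n.+1 d.+1)%N.
Proof.
pose S' := restr_pattern @: S.
have -> : #|S| = \sum_(P' in S') #|fiber P'|.
  rewrite -sum1_card (partition_big_imset restr_pattern) /=; apply: eq_bigr => P' _.
  by rewrite -sum1_card; apply: eq_bigl => P; rewrite inE.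
apply: (@leq_trans (\sum_(P' in S') #|K P'|.+1)).
  by apply: leq_sum => P' _; exact: card_fiber.
apply: leq_trans (pattern_boundSS n d).
under eq_bigr do rewrite -add1n.
rewrite big_split /= sum1_card sum_card_incidence.
apply: leq_add; first exact: card_realized_n realized_restr.
rewrite -[X in (X * _)%N]card_ord -sum_nat_const; apply: leq_sum => b _.
exact: card_crossing.
Qed.

End CountingStep.

Lemma card_realized_le n d (F : 'I_n -> affine d) (S : {set pattern n}) :
  {in S, forall P, realized F P} -> (#|S| <= pattern_bound n d)%N.
Proof.
elim: n d F S => [|n IH] d F S realized_S.
  by rewrite (leq_trans (max_card _)) // card_ffun card_prod card_ord.
case: d F S realized_S => [|d] F S realized_S.
  by rewrite pattern_bound0; exact: card_realized_dim0 realized_S.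
exact: card_realized_step realized_S IH.
Qed.

End AffineFunctionals.

(* |x - u|^2 = (|x|^2 - 2<x, u>) + |u|^2, where the last term does not depend on x *)
Definition sqdist_affine (R : realType) d (x : 'rV[R]_d) : affine R d :=
  (\sum_k x 0 k ^+ 2, -2 *: x).

Lemma enorm_lt (R : realType) d (x y u : 'rV[R]_d) :
  (enorm (x - u) < enorm (y - u)) = (aeval (sqdist_affine x) u < aeval (sqdist_affine y) u).
Proof.
have sqE v : \sum_k ((v - u) 0 k) ^+ 2 = aeval (sqdist_affine v) u + \sum_k u 0 k ^+ 2.
  by rewrite /aeval /= -!big_split; apply: eq_bigr => k _ /=; rewrite !mxE; ring.
have sum_sq_ge0 v : 0 <= \sum_k ((v - u) 0 k) ^+ 2 by apply: sumr_ge0 => k _; exact: sqr_ge0.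
by rewrite /enorm !ltNge ler_psqrt ?nnegrE // !sqE lerD2r.
Qed.

Lemma card_representable_le (R : realType) A d (S : {set {perm 'I_A}}) :
  representable R d S -> (#|S| <= pattern_bound A d)%N.
Proof.
move=> [x [w rep]]; pose F a := sqdist_affine (x a).
rewrite -(card_imset _ (@lt_pattern_perm_inj A)).
apply: (card_realized_le (F := F)) => _ /imsetP[s Ss ->].
have pat_s : lt_pattern (aeval_at F (w s)) = lt_pattern s.
  by apply/eq_lt_pattern => a b; rewrite /aeval_at -enorm_lt; apply/idP/idP => /(rep s Ss).
by exists (w s) => //; apply: lt_pattern_inj pat_s (@perm_inj _ s).
Qed.

Theorem lemma1 (R : realType) (A d r : nat) (profile : seq {perm 'I_A}) :
  (0 < A)%N -> (0 < d)%N -> (d < A - 1)%N ->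
  is_max_representable R A d r ->
  (r <= n_unique profile)%N ->
  (r%:R : rat) <= (1 - unif_prob (event_C A d)) * (A`!)%:R.
Proof.
(* The bound holds for all A and d, and does not involve the profile. *)
move=> _ _ _ [[S [rep_S <-]] _] _.
have le_S : (#|S| <= #|~: event_C A d|)%N.
  apply: leq_trans (card_representable_le rep_S) _.
  apply: leq_trans (pattern_bound_le_staircase A d) _.
  exact/subset_leq_card/staircase_sub_compl_event_C.
rewrite /unif_prob card_Sn mulrBl mul1r divfK ?pnatr_eq0 -?lt0n ?fact_gt0 //.
by rewrite -card_Sn -(cardsC (event_C A d)) natrD addrAC subrr add0r ler_nat.
Qed.
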